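(* Let $x_0\in X$ be a regular point. Every non-negative $p$-harmonic function $u$ on $\mathcal T(x_0)$ is the quotient of two additive functions on $\mathcal T(x_0)$; specifically $u=\nu/\nu_0$ for some additive $\nu$, where $\nu_0(x)=W^{(n(x))}(x)$ is additive.
   Context: $X$ is a compact metric space, $r:X\to X$ a finite-to-one, onto, Borel map, $m_0$ a Borel function with $\frac{1}{\#r^{-1}(x)}\sum_{r(y)=x}|m_0(y)|^2=1$, and $W(x)=|m_0(x)|^2/\#r^{-1}(r(x))$, so $\sum_{r(y)=x}W(y)=1$. A point $x_0$ is regular if the sets $r^{-n}(x_0)$, $n\in\mathbb N$, are mutually disjoint and no $r^{-n}(x_0)$, $n\ge0$, meets the zero set of $W$. $\mathcal T(x_0)=\bigcup_{n\ge0}r^{-n}(x_0)$; $n(x)$ is the unique $n\ge0$ with $r^n(x)=x_0$; $W^{(n)}(x)=W(x)W(r(x))\cdots W(r^{n-1}(x))$. $u$ is $p$-harmonic if $u(x)=\sum_{r(y)=x}W(y)u(y)$ on $\mathcal T(x_0)$. A non-negative $\nu$ on $\mathcal T(x_0)$ is additive if $\nu(x)=\sum_{r(y)=x}\nu(y)$ for all $x\in\mathcal T(x_0)$. *)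

From HB Require Import structures.
From mathcomp Require Import all_boot all_order all_algebra.
From mathcomp Require Import all_classical all_reals all_analysis.
From mathcomp Require Import complex.
Set Implicit Arguments. Unset Strict Implicit. Unset Printing Implicit Defensive.
Import Order.TTheory GRing.Theory Num.Theory.
Import numFieldNormedType.Exports.
Local Open Scope classical_set_scope.
Local Open Scope ring_scope.

Definition borel_set (T : topologicalType) (A : set T) : Prop := <<s open >> A.

Definition borel_map (T U : topologicalType) (f : T -> U) : Prop :=
  forall B : set U, borel_set B -> borel_set (f @^-1` B).

Definition borel_cfun (R : realType) (T : topologicalType) (f : T -> R[i]) : Prop :=
  @borel_map T R (fun x => complex.Re (f x)) /\ @borel_map T R (fun x => complex.Im (f x)).

Section Dyn.
Context {R : realType} {X : choiceType}.
Variables (r : X -> X).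

Definition fib (x : X) : set X := r @^-1` [set x].

Definition nfib (x : X) : R := (\sum_(y \in fib x) (1 : R))%R.

Definition Wfun (m0 : X -> R[i]) (x : X) : R := (Normc.normc (m0 x)) ^+ 2 / nfib (r x).

Definition Wn (W : X -> R) (n : nat) (x : X) : R := \prod_(k < n) W (iter k r x).

Definition preim_n (x0 : X) (n : nat) : set X := [set x | iter n r x = x0].

Definition regular (W : X -> R) (x0 : X) : Prop :=
  (forall m n : nat, m <> n -> [disjoint preim_n x0 m & preim_n x0 n]) /\
  (forall (n : nat) (x : X), preim_n x0 n x -> W x <> 0).

Definition tree (x0 : X) : set X := \bigcup_(n in [set: nat]) preim_n x0 n.

(* n(x): the (unique, for regular x0) n >= 0 with r^n(x) = x0 *)
Definition nlev (x0 : X) (x : X) : nat := xget 0%N [set n | iter n r x = x0].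

Definition p_harmonic (W : X -> R) (x0 : X) (u : X -> R) : Prop :=
  forall x, tree x0 x -> u x = (\sum_(y \in fib x) W y * u y)%R.

Definition additive_on_tree (x0 : X) (nu : X -> R) : Prop :=
  (forall x, tree x0 x -> 0 <= nu x) /\
  (forall x, tree x0 x -> nu x = (\sum_(y \in fib x) nu y)%R).

Definition nu0 (W : X -> R) (x0 : X) (x : X) : R := Wn W (nlev x0 x) x.
End Dyn.

From HB Require Import structures.
From mathcomp Require Import all_boot all_order all_algebra.
From mathcomp Require Import all_classical all_reals all_analysis.
From mathcomp Require Import complex.
Import Order.TTheory GRing.Theory Num.Theory.
Import numFieldNormedType.Exports.
Local Open Scope classical_set_scope.
Local Open Scope ring_scope.

(* Regularity makes the level n(x) well defined, so for r y = x in the tree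
   nu0 y = W y * nu0 x.  Since W sums to 1 over each fibre, nu0 is additive,
   and p-harmonicity of u is exactly additivity of u * nu0; finally nu0 does
   not vanish on the tree, so u = (u * nu0) / nu0. *)

Section Levels.
Context {R : realType} {X : choiceType} {r : X -> X} {W : X -> R} {x0 : X}.

Lemma nlevP x : tree r x0 x -> iter (nlev r x0 x) r x = x0.
Proof. by move=> [n _ hn]; exact: (xgetI 0%N (P := [set k | iter k r x = x0]) hn). Qed.

Hypothesis rg : regular r W x0.

Lemma nlev_eq {n x} : iter n r x = x0 -> nlev r x0 x = n.
Proof.
move=> hn; apply: contrapT => neq; have /disj_set2P dis := rg.1 _ _ neq.
have : (preim_n r x0 (nlev r x0 x) `&` preim_n r x0 n) x by split; [apply: nlevP; exists n|].
by rewrite dis.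
Qed.

Lemma nu0_neq0 {x} : tree r x0 x -> nu0 r W x0 x != 0.
Proof.
move=> /nlevP; rewrite /nu0 /Wn; set n := nlev r x0 x => hn.
apply/prodf_neq0 => k _; apply/eqP; apply: (rg.2 (n - k)%N).
by rewrite /preim_n /= -iterD subnK // ltnW.
Qed.

Lemma nu0_fib {x y} : tree r x0 x -> r y = x -> nu0 r W x0 y = W y * nu0 r W x0 x.
Proof.
move=> /nlevP hx ry.
have hy : iter (nlev r x0 x).+1 r y = x0 by rewrite iterSr ry.
rewrite /nu0 (nlev_eq hy) /Wn big_ord_recl /=.
by congr (_ * _); apply: eq_bigr => k _; rewrite add0n -iterS iterSr ry.
Qed.

Hypothesis W_ge0 : forall x, 0 <= W x.
Hypothesis fsum_W_fib : forall x, tree r x0 x -> \sum_(y \in fib r x) W y = 1.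

Lemma additive_nu0 : additive_on_tree r x0 (nu0 r W x0).
Proof.
split=> [x _|x tx]; first by apply: prodr_ge0 => k _; exact: W_ge0.
under eq_fsbigr => y /[!inE] ry do rewrite (nu0_fib tx ry).
by rewrite -mulr_fsuml fsum_W_fib // mul1r.
Qed.

Lemma additive_harmonic_mul_nu0 (u : X -> R) :
  (forall x, tree r x0 x -> 0 <= u x) -> p_harmonic r W x0 u ->
  additive_on_tree r x0 (fun x => u x * nu0 r W x0 x).
Proof.
move=> u_ge0 uh; split=> x tx; first by rewrite mulr_ge0 ?u_ge0 ?additive_nu0.1.
rewrite uh // mulr_fsuml; apply: eq_fsbigr => y /[!inE] ry.
by rewrite (nu0_fib tx ry) mulrCA mulrA.
Qed.

End Levels.

Section Wfun.
Context {R : realType} {X : choiceType}.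
Variables (r : X -> X) (m0 : X -> R[i]).

Lemma Wfun_ge0 x : 0 <= Wfun r m0 x.
Proof.
rewrite /Wfun divr_ge0 ?exprn_ge0 //; last by apply: fsumr_ge0 => y _; exact: ler01.
by case: (m0 x) => a b; rewrite /Normc.normc sqrtr_ge0.
Qed.

Lemma fsum_Wfun_fib x :
  (nfib (R := R) r x)^-1 * (\sum_(y \in fib r x) (Normc.normc (m0 y)) ^+ 2) = 1 ->
  \sum_(y \in fib r x) Wfun r m0 y = 1.
Proof.
move=> <-; rewrite mulr_fsumr; apply: eq_fsbigr => y /[!inE] ry.
by rewrite /Wfun ry mulrC.
Qed.

End Wfun.

Theorem corollary4p9 (R : realType) (X : pseudoMetricType R)
  (r : X -> X) (m0 : X -> R[i]) (x0 : X) (u : X -> R) :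
  (* X is a compact metric space *)
  hausdorff_space X -> compact [set: X] ->
  (* r is finite-to-one, onto, Borel *)
  (forall x : X, finite_set (fib r x)) ->
  (forall x : X, exists y : X, r y = x) ->
  borel_map r ->
  (* m0 is Borel and normalized *)
  borel_cfun m0 ->
  (forall x : X, (nfib r x)^-1 * (\sum_(y \in fib r x) (Normc.normc (m0 y)) ^+ 2)%R = 1) ->
  (* x0 is regular *)
  regular r (Wfun r m0) x0 ->
  (* u is non-negative and p-harmonic on T(x0) *)
  (forall x, tree r x0 x -> 0 <= u x) ->
  p_harmonic r (Wfun r m0) x0 u ->
  additive_on_tree r x0 (nu0 r (Wfun r m0) x0) /\
  exists nu : X -> R, additive_on_tree r x0 nu /\
    forall x, tree r x0 x -> u x = nu x / nu0 r (Wfun r m0) x0 x.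
Proof.
move=> _ _ _ _ _ _ normalized rg u_ge0 uh.
have sumW x : tree r x0 x -> \sum_(y \in fib r x) Wfun r m0 y = 1.
  by move=> _; exact: fsum_Wfun_fib.
split; first exact: additive_nu0 rg (@Wfun_ge0 _ _ r m0) sumW.
exists (fun x => u x * nu0 r (Wfun r m0) x0 x); split.
  exact: additive_harmonic_mul_nu0 rg (@Wfun_ge0 _ _ r m0) sumW u u_ge0 uh.
by move=> x tx; rewrite mulfK // (nu0_neq0 rg tx).
Qed.
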